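(* Let $G$ be a finite group and $N$ a normal subgroup with $1<N<G$ such that every $x\in G\setminus N$ is conjugate in $G$ to every element of $xN$ (i.e. $(G,N)$ is a Camina pair). Let $A=\{\chi_1,\dots,\chi_n\}$ be a set of non-trivial irreducible characters of $G$ such that (i) each $\chi_i$ vanishes on $G\setminus N$, and (ii) there exist positive integers $\alpha_1,\dots,\alpha_n$ such that $\sum_{i=1}^n\alpha_i\chi_i$ is constant on $N\setminus\{1\}$. Then $A=\mathrm{Irr}(G\mid N)$.
   Context: $\mathrm{Irr}(G)$ denotes the set of complex irreducible characters of $G$, and $\mathrm{Irr}(G\mid N)=\{\chi\in\mathrm{Irr}(G)\mid N\not\le\ker\chi\}$. *)

From mathcomp Require Import all_boot all_order all_algebra all_fingroup all_solvable all_field all_character.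
Set Implicit Arguments. Unset Strict Implicit. Unset Printing Implicit Defensive.
Import GRing.Theory Num.Theory.
Local Open Scope ring_scope.

Definition camina_pair (gT : finGroupType) (G N : {set gT}) : Prop :=
  forall x, x \in G :\: N -> forall n, n \in N -> ((x * n) \in x ^: G)%g.

(* Irr(G | N) as a set of indices: irreducibles whose kernel does not contain N. *)
Definition Irr_rel (gT : finGroupType) (G N : {group gT}) : {set Iirr G} :=
  [set i : Iirr G | ~~ (N \subset cfker ('chi[G]_i)%CF)].

From mathcomp Require Import all_boot all_order all_algebra all_fingroup all_solvable all_field all_character.
Import GRing.Theory Num.Theory.
Local Open Scope ring_scope.

(* A class function psi that vanishes off N and is constant (= c) on N^# is
   the combination c 1_N + d rho_G of the indicator of N and the regular
   character.  The characters of Irr(G | N) are orthogonal to 1_N, so each of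
   them occurs in psi with multiplicity d chi(1).  If psi = sum alpha_i chi_i
   with alpha_i > 0, then d <> 0 (the chi_i lie in Irr(G | N), since an
   irreducible character vanishing off N with N in its kernel is principal),
   so the constituents of psi are exactly Irr(G | N). *)

Lemma cfdot_cfReg_irr (gT : finGroupType) (G : {group gT}) (j : Iirr G) :
  '[cfReg G, 'chi_j] = 'chi_j 1%g.
Proof.
rewrite cfReg_sum cfdot_suml (bigD1 j) //= cfdotZl cfdot_irr eqxx mulr1.
by rewrite big1 ?addr0 // => i /negPf neq_ij; rewrite cfdotZl cfdot_irr neq_ij mulr0.
Qed.

Section VanishingOffNormal.

Context {gT : finGroupType} {G N : {group gT}}.
Hypothesis nsNG : (N <| G)%g.

Lemma cfdot_irr_cfuni_eq0 (j : Iirr G) :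
  ~~ (N \subset cfker 'chi_j) -> '['chi_j, '1_N]_G = 0.
Proof.
move=> kerNj.
have Res_j_1 : '['Res[N] 'chi_j, 1] = 0.
  apply/eqP; apply: contraR kerNj => nz.
  by apply: constt0_Res_cfker => //; rewrite irr_consttE irr0.
have /eqP := Res_j_1; rewrite cfdot_Res_l cfInd_cfun1 // cfdotZr mulf_eq0.
by rewrite conjC_eq0 pnatr_eq0 eqn0Ngt indexg_gt0 => /eqP.
Qed.

Lemma irr_vanishing_off_ker_eq0 {j : Iirr G} :
  {in G :\: N, forall x, 'chi_j x = 0} -> N \subset cfker 'chi_j -> j = 0.
Proof.
move=> vanj kerNj.
have chi_j_uni : 'chi_j = 'chi_j 1%g *: '1_N.
  apply/cfun_inP => x Gx; rewrite cfunE cfuniE //.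
  have [Nx | notNx] := boolP (x \in N).
    by rewrite mulr1 cfker1 ?(subsetP kerNj).
  by rewrite mulr0 vanj // inE notNx.
suff : '['chi_j, 'chi_0] != 0 by rewrite cfdot_irr pnatr_eq0 eqb0 negbK => /eqP.
rewrite chi_j_uni irr0 -cfuniG cfdotZl cfdot_cfuni ?normal_refl //.
by rewrite (setIidPl (normal_sub nsNG)) !mulf_neq0 ?irr1_neq0 ?invr_eq0 ?neq0CG.
Qed.

Lemma cfun_vanishing_off_normal {psi : 'CF(G)} {c : algC} :
  {in G :\: N, forall x, psi x = 0} -> {in (N^#)%g, forall x, psi x = c} ->
  psi = c *: '1_N + ((psi 1%g - c) / #|G|%:R) *: cfReg G.
Proof.
move=> psi_out psi_in; apply/cfun_inP => x Gx.
rewrite cfunE [((c *: _ : 'CF(G)) x)]cfunE [((_ *: cfReg G : 'CF(G)) x)]cfunE.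
rewrite cfRegE cfuniE //.
have [-> | x_neq1] := eqVneq x 1%g.
  by rewrite group1 mulr1 mulr1n divfK ?neq0CG // addrC subrK.
rewrite mulr0n mulr0 addr0.
have [Nx | notNx] := boolP (x \in N); first by rewrite mulr1 psi_in // !inE x_neq1.
by rewrite mulr0 psi_out // inE notNx.
Qed.

Lemma cfdot_vanishing_off_normal_irr {psi : 'CF(G)} {c : algC} {j : Iirr G} :
  {in G :\: N, forall x, psi x = 0} -> {in (N^#)%g, forall x, psi x = c} ->
  ~~ (N \subset cfker 'chi_j) ->
  '[psi, 'chi_j] = (psi 1%g - c) / #|G|%:R * 'chi_j 1%g.
Proof.
move=> psi_out psi_in kerNj.
rewrite {1}(cfun_vanishing_off_normal psi_out psi_in) cfdotDl cfdotZl.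
rewrite [X in _ + X]cfdotZl cfdot_cfReg_irr.
by rewrite cfdotC cfdot_irr_cfuni_eq0 // conjC0 mulr0 add0r.
Qed.

End VanishingOffNormal.

Lemma cfdot_sum_irr_in (gT : finGroupType) (G : {group gT}) (A : {set Iirr G})
    (a : Iirr G -> algC) (j : Iirr G) :
  '[\sum_(i in A) a i *: 'chi_i, 'chi_j] = (j \in A)%:R * a j.
Proof.
rewrite cfdot_suml; have [jA | notjA] := boolP (j \in A).
  rewrite (bigD1 j) //= cfdotZl cfdot_irr eqxx mul1r mulr1 big1 ?addr0 // => i.
  by case/andP=> _ /negPf neq_ij; rewrite cfdotZl cfdot_irr neq_ij mulr0.
rewrite mul0r big1 // => i iA; rewrite cfdotZl cfdot_irr.
by case: eqVneq iA => [-> | _]; rewrite ?(negPf notjA) ?mulr0.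
Qed.

Theorem mainTheorem4 (gT : finGroupType) (G N : {group gT}) (A : {set Iirr G}) :
  (N <| G)%g -> (N :!=: 1)%g -> N \proper G ->
  camina_pair G N ->
  A != set0 ->
  (forall i, i \in A -> 'chi[G]_i != 1) ->
  (forall i, i \in A -> forall x, x \in G :\: N -> 'chi[G]_i x = 0) ->
  (exists alpha : Iirr G -> nat,
     (forall i, i \in A -> (0 < alpha i)%N) /\
     exists c : algC, forall x, x \in (N^#)%g ->
       (\sum_(i in A) (alpha i)%:R * 'chi[G]_i x) = c) ->
  A = Irr_rel G N.
Proof.
move=> nsNG _ _ _ /set0Pn[k kA] nontriv van [alpha [alpha_pos [c psi_N]]].
have A_rel j : j \in A -> ~~ (N \subset cfker 'chi_j).
  move=> jA; apply: contra (nontriv j jA) => kerNj.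
  by rewrite (irr_vanishing_off_ker_eq0 nsNG (van j jA) kerNj) irr0.
pose psi : 'CF(G) := \sum_(i in A) (alpha i)%:R *: 'chi_i.
have psiE x : psi x = \sum_(i in A) (alpha i)%:R * 'chi_i x.
  by rewrite sum_cfunE; apply: eq_bigr => i _; rewrite cfunE.
have psi_out : {in G :\: N, forall x, psi x = 0}.
  by move=> x xGN; rewrite psiE big1 // => i iA; rewrite van ?mulr0.
have psi_in : {in (N^#)%g, forall x, psi x = c}.
  by move=> x xN; rewrite psiE psi_N.
pose d := (psi 1%g - c) / #|G|%:R.
have psi_rel j : ~~ (N \subset cfker 'chi_j) ->
    (j \in A)%:R * (alpha j)%:R = d * 'chi_j 1%g.
  move=> kerNj; rewrite -(cfdot_sum_irr_in _ _ A (fun i => (alpha i)%:R)).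
  exact: (cfdot_vanishing_off_normal_irr nsNG psi_out psi_in kerNj).
have d_neq0 : d != 0.
  apply: contraTneq (alpha_pos k kA) => d0.
  have := psi_rel k (A_rel k kA); rewrite d0 mul0r kA mul1r => /eqP.
  by rewrite pnatr_eq0 -eqn0Ngt.
apply/setP => j; rewrite inE; apply/idP/idP => [|kerNj]; first exact: A_rel.
apply: contraT => notjA.
have := psi_rel j kerNj; rewrite (negPf notjA) mul0r => /esym/eqP.
by rewrite mulf_eq0 (negPf d_neq0) (negPf (irr1_neq0 j)).
Qed.
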